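(* Let $(X,+,d)$ be an Abelian group with translation-invariant metric $d$. Let $A\in K(X)$, let $(A_n)$ be a sequence in $K(X)$ converging to $A$ in the Pompeiu–Hausdorff metric, and assume that $(S(A_n))$ converges in $K(X)$ to some $B\in K(X)$. Then $B\subset S(A)$.
   Context: $d$ satisfies $d(x,y)=d(x+z,y+z)$ for all $x,y,z\in X$. $K(X)$ is the family of non-empty compact subsets of $X$ with the Pompeiu–Hausdorff metric $d_H(A,B)=\max\{\sup_{a\in A}d(a,B),\sup_{b\in B}d(A,b)\}$. The spectre of $A\subset X$ is $S(A):=\{z\in X:\ \forall_{a\in A}\ (a+z\in A \text{ or } a-z\in A)\}$; it is compact for compact non-empty $A$. *)

From mathcomp Require Import all_boot all_order all_algebra.
From mathcomp Require Import all_classical all_reals.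
Set Implicit Arguments. Unset Strict Implicit. Unset Printing Implicit Defensive.
Import Order.TTheory GRing.Theory Num.Theory.
Local Open Scope classical_set_scope.
Local Open Scope ring_scope.

Section Defs.
Variables (R : realType) (X : zmodType) (d : X -> X -> R).

Definition is_metric : Prop :=
  [/\ forall x y, 0 <= d x y,
      forall x y, d x y = 0 <-> x = y,
      forall x y, d x y = d y x &
      forall x y z, d x z <= d x y + d y z].

Definition translation_invariant : Prop :=
  forall x y z, d x y = d (x + z) (y + z).

Definition mball (x : X) (r : R) : set X := [set y | d x y < r].

Definition mopen (U : set X) : Prop :=
  forall x, U x -> exists2 r : R, 0 < r & mball x r `<=` U.

Definition mcompact (A : set X) : Prop :=
  forall (I : Type) (U : I -> set X),
    (forall i, mopen (U i)) -> A `<=` \bigcup_(i in setT) U i ->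
    exists2 F : set I, finite_set F & A `<=` \bigcup_(i in F) U i.

Definition inK (A : set X) : Prop := A !=set0 /\ mcompact A.

Definition dist_ps (a : X) (B : set X) : R := inf [set d a b | b in B].
Definition dist_sp (A : set X) (b : X) : R := inf [set d a b | a in A].

Definition dH (A B : set X) : R :=
  Num.max (sup [set dist_ps a B | a in A]) (sup [set dist_sp A b | b in B]).

Definition cvgH (An : nat -> set X) (A : set X) : Prop :=
  forall e : R, 0 < e -> exists N : nat, forall n, (N <= n)%N -> dH (An n) A < e.

Definition spectre (A : set X) : set X :=
  [set z | forall a, A a -> A (a + z) \/ A (a - z)].

End Defs.

From mathcomp Require Import all_boot all_order all_algebra.
From mathcomp Require Import all_classical all_reals.
From mathcomp Require Import lra.
Set Implicit Arguments. Unset Strict Implicit. Unset Printing Implicit Defensive.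
Import Order.TTheory GRing.Theory Num.Theory.
Local Open Scope classical_set_scope.
Local Open Scope ring_scope.

(* Fix z in B and a in A. For large n, z is close to some z' in S(A_n) and a to
   some a' in A_n; then a' + z' or a' - z' lies in A_n, hence is close to a point
   of A. Translation invariance makes a +- z close to a' +- z', so a + z or a - z
   is at arbitrarily small distance from A, and A, being compact, is closed. *)

Section Metric.
Variables (R : realType) (X : zmodType) (d : X -> X -> R).
Hypothesis hd : is_metric d.

Lemma d_ge0 x y : 0 <= d x y. Proof. by case: hd. Qed.
Lemma d_sym x y : d x y = d y x. Proof. by case: hd. Qed.
Lemma d_tri x y z : d x z <= d x y + d y z. Proof. by case: hd. Qed.
Lemma d_eq0 x y : d x y = 0 <-> x = y. Proof. by case: hd. Qed.

Lemma mcompact_increasing_cover (A : set X) (U : nat -> set X) :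
  mcompact d A -> (forall n, mopen d (U n)) ->
  (forall m n, (m <= n)%N -> U m `<=` U n) ->
  A `<=` \bigcup_(i in setT) U i -> exists n, A `<=` U n.
Proof.
move=> cA Uo Uinc cov; have [F fF sub] := cA nat U Uo cov.
exists (\max_(j <- finmap.enum_fset (fset_set F)) j)%N => x /sub[i Fi Uix].
apply: (Uinc i) Uix; apply: (@leq_bigmax_seq _ _ xpredT id) => //.
by rewrite in_fset_set //; apply/mem_set.
Qed.

Lemma mball_open x r : mopen d (mball d x r).
Proof.
move=> y ry; exists (r - d x y); first by rewrite subr_gt0.
by move=> w yw; have := d_tri x y w; rewrite /mball /= in ry yw *; lra.
Qed.

Lemma mopen_dist_gt x (r : R) : mopen d [set y | r < d x y].
Proof.
move=> y ry; exists (d x y - r); first by rewrite subr_gt0.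
move=> w; rewrite /mball /= => yw; have := d_tri x w y; rewrite (d_sym w y) /=.
by rewrite /= in ry; lra.
Qed.

Definition mbounded (A : set X) := exists c r, forall a, A a -> d c a <= r.

Lemma mcompact_bounded A : mcompact d A -> mbounded A.
Proof.
move=> cA; have [n An] : exists n, A `<=` mball d 0 n%:R.
  apply: mcompact_increasing_cover => // [n|m n mn y|y _]; first exact: mball_open.
    by rewrite /mball /= => /lt_le_trans; apply; rewrite ler_nat.
  exists (Num.Def.archi_bound (d 0 y)) => //.
  by apply: archi_boundP; apply: d_ge0.
by exists 0, n%:R => a /An /ltW.
Qed.

(* A is covered by the increasing open sets [1/(n+1) < d x y]. *)
Lemma mcompact_dist_gt0 A x : mcompact d A -> ~ A x ->
  exists2 e : R, 0 < e & forall y, A y -> e <= d x y.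
Proof.
move=> cA nAx; pose U n := [set y | (n.+1%:R^-1 : R) < d x y].
have [n An] : exists n, A `<=` U n.
  apply: mcompact_increasing_cover => // [n|m n mn y|y Ay]; first exact: mopen_dist_gt.
    by rewrite /U /=; apply: le_lt_trans; rewrite lef_pV2 ?posrE // ler_nat.
  have dxy : 0 < d x y.
    by rewrite lt_neqAle d_ge0 andbT; apply/eqP => /esym/d_eq0 xy; apply: nAx; rewrite xy.
  exists (Num.Def.archi_bound (d x y)^-1) => //; rewrite /U /= -[X in _ < X]invrK.
  rewrite ltf_pV2 ?posrE ?invr_gt0 ?ltr0Sn //.
  apply: (lt_le_trans (archi_boundP _)); first by rewrite invr_ge0 ltW.
  by rewrite ler_nat.
by exists n.+1%:R^-1 => [|y /An /ltW]; rewrite ?invr_gt0 ?ltr0Sn.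
Qed.

Lemma dist_sp_le C b c : C c -> dist_sp d C b <= d c b.
Proof.
move=> Cc; apply: ge_inf; last by exists c.
by exists 0 => _ [a _ <-]; apply: d_ge0.
Qed.

Lemma dist_sp_lt C b e : C !=set0 -> dist_sp d C b < e ->
  exists2 c, C c & d c b < e.
Proof.
move=> [c Cc] Cbe; have e0 : 0 < e - dist_sp d C b by rewrite subr_gt0.
have hinf : has_inf [set d a b | a in C].
  by split; [exists (d c b), c | exists 0 => _ [a _ <-]; apply: d_ge0].
have [_ [a Ca <-]] := inf_adherent e0 hinf.
by rewrite /dist_sp addrC subrK; exists a.
Qed.

Lemma dist_ps_sp a C : dist_ps d a C = dist_sp d C a.
Proof.
by rewrite /dist_ps /dist_sp; congr inf; apply/seteqP; split=> _ [b Cb <-];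
  exists b => //; rewrite d_sym.
Qed.

Lemma dist_sp_le_sup C D b : C !=set0 -> mbounded D -> D b ->
  dist_sp d C b <= sup [set dist_sp d C b | b in D].
Proof.
move=> [c0 Cc0] [c [r Dr]] Db; apply: ub_le_sup; last by exists b.
exists (d c0 c + r) => _ [y Dy <-]; apply: (le_trans (dist_sp_le _ Cc0)).
by have := d_tri c0 c y; have := Dr y Dy; lra.
Qed.

Lemma dH_lt_near_l C D b e : C !=set0 -> mbounded D -> D b -> dH d C D < e ->
  exists2 c, C c & d c b < e.
Proof.
move=> C0 bD Db CDe; apply: dist_sp_lt => //; apply: le_lt_trans CDe.
by apply: (le_trans (dist_sp_le_sup C0 bD Db)); rewrite le_max lexx orbT.
Qed.

Lemma dH_lt_near_r C D c e : D !=set0 -> mbounded C -> C c -> dH d C D < e ->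
  exists2 b, D b & d c b < e.
Proof.
move=> D0 bC Cc CDe.
suff [b Db bc] : exists2 b, D b & d b c < e by exists b; rewrite // d_sym.
apply: dist_sp_lt => //; apply: le_lt_trans CDe; rewrite /dH.
have -> : [set dist_ps d a D | a in C] = [set dist_sp d D a | a in C].
  by apply/seteqP; split=> _ [a Ca <-]; exists a; rewrite ?dist_ps_sp.
by apply: (le_trans (dist_sp_le_sup D0 bC Cc)); rewrite le_max lexx.
Qed.

Hypothesis hti : translation_invariant d.

Lemma d_addD a a' z z' : d (a + z) (a' + z') <= d a a' + d z z'.
Proof.
apply: (le_trans (d_tri _ (a' + z) _)).
by rewrite -hti [a' + z]addrC [a' + z']addrC -hti.
Qed.

Lemma d_oppr z z' : d (- z) (- z') = d z z'.
Proof. by rewrite (hti _ _ (z + z')) addKr (addrC z) addKr d_sym. Qed.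

Lemma d_addD_lt a a' z z' y (e : R) :
  d a a' < e / 4 -> d z z' < e / 4 -> d (a' + z') y < e / 4 -> d (a + z) y < e.
Proof.
move=> aa' zz' w'y; have := d_tri (a + z) (a' + z') y; have := d_addD a a' z z'.
have := d_ge0 a a'; lra.
Qed.

Lemma spectre0 (A : set X) : spectre A 0.
Proof. by move=> a Aa; left; rewrite addr0. Qed.

Section SpectreLimit.
Variables (A B : set X) (An : nat -> set X).
Hypotheses (hA : inK d A) (hAn : forall n, inK d (An n)) (hB : inK d B).
Hypotheses (hconv : cvgH d An A) (hS : cvgH d (fun n => spectre (An n)) B).

Lemma spectre_limit_near z a e : B z -> A a -> 0 < e ->
  exists2 y, A y & d (a + z) y < e \/ d (a - z) y < e.
Proof.
move=> Bz Aa e0; have e4 : 0 < e / 4 by rewrite divr_gt0.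
have [N1 AnA] := hconv e4; have [N2 SnB] := hS e4.
pose n := maxn N1 N2; have AnAe := AnA n (leq_maxl _ _).
have [a' Ana' aa'] := dH_lt_near_l (proj1 (hAn n)) (mcompact_bounded hA.2) Aa AnAe.
have Sn0 : spectre (An n) !=set0 by exists 0; apply: spectre0.
have [z' Snz' zz'] :=
  dH_lt_near_l Sn0 (mcompact_bounded hB.2) Bz (SnB n (leq_maxr _ _)).
rewrite d_sym in aa'; rewrite d_sym in zz'.
have nearA w : An n w -> exists2 y, A y & d w y < e / 4.
  by move=> Anw; apply: dH_lt_near_r (proj1 hA) (mcompact_bounded (hAn n).2) Anw AnAe.
case: (Snz' a' Ana') => /nearA[y Ay w'y]; exists y => //.
  by left; apply: (d_addD_lt aa' zz').
by right; apply: (d_addD_lt aa' _ w'y); rewrite d_oppr.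
Qed.

End SpectreLimit.
End Metric.

Theorem lemma3p8 (R : realType) (X : zmodType) (d : X -> X -> R)
  (hd : is_metric d) (hti : translation_invariant d)
  (A : set X) (An : nat -> set X) (B : set X)
  (hA : inK d A) (hAn : forall n, inK d (An n)) (hB : inK d B)
  (hconv : cvgH d An A)
  (hS : cvgH d (fun n => spectre (An n)) B) :
  B `<=` spectre A.
Proof.
move=> z Bz a Aa.
case: (pselect (A (a + z))) => [|nAp]; first by left.
case: (pselect (A (a - z))) => [|nAm]; first by right.
have [e1 e1_gt0 Ae1] := mcompact_dist_gt0 hd hA.2 nAp.
have [e2 e2_gt0 Ae2] := mcompact_dist_gt0 hd hA.2 nAm.
have e_gt0 : 0 < Num.min e1 e2 by rewrite lt_min e1_gt0 e2_gt0.
have [y Ay] := spectre_limit_near hd hti hA hAn hB hconv hS Bz Aa e_gt0.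
rewrite !lt_min => -[/andP[ay _] | /andP[_ ay]].
- by have := lt_le_trans ay (Ae1 y Ay); rewrite ltxx.
- by have := lt_le_trans ay (Ae2 y Ay); rewrite ltxx.
Qed.
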